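(* Let $v_1\ge v_2\ge\cdots\ge v_n\ge 0$ be reals with $v_1>0$, and let $k=\max\{i:v_i>v_1/2\}$. For each $i\in[n]$ define $$B_i=\frac{\log_2^\dagger(2v_i/v_1)}{k+1}+\sum_{j=1}^k\frac{\log_2^\dagger(v_i/v_j)}{j(j+1)}.$$ Then $\sum_{i=1}^nB_i\le1$.
   Context: $\log_2^\dagger(\alpha)=\max(0,\min(1,\log_2\alpha))$ for $\alpha\ge 0$, with $\log_2 0=-\infty$ (so $\log_2^\dagger(0)=0$). *)

From Stdlib Require Import Reals.
Open Scope R_scope.

Definition log2 (x : R) : R := ln x / ln 2.

(* log2^dagger(a) = max(0, min(1, log2 a)) for a >= 0, with log2 0 = -oo,
   so log2^dagger(0) = 0.  For a <= 0 we return 0. *)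
Definition log2dag (a : R) : R :=
  if Rle_dec a 0 then 0 else Rmax 0 (Rmin 1 (log2 a)).

(* B_i with 1-based sequence v and parameter k *)
Definition Bval (v : nat -> R) (k i : nat) : R :=
  log2dag (2 * v i / v 1%nat) / INR (k + 1)
  + sum_f 1 k (fun j => log2dag (v i / v j) / (INR j * (INR j + 1))).

From Stdlib Require Import Reals Lra Lia.
Open Scope R_scope.

(* Write k = K + 1 and index the top block v_1, ..., v_k by
   x = 0, ..., K, setting M_x = log2 v_(x+1) - log2 v_1 <= 0.  On the top
   block every value lies in (v_1/2, v_1], so each ratio v_i/v_j met in B_i
   is either <= 1 (and log2dag vanishes) or in [1, 2] (and log2dag is plain
   log2).  Hence for x <= K
     B_(x+1) = (1 + M_x)/(K+2) + sum_(x<y<=K) (M_x - M_y)/((y+1)(y+2)),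
   while B_i = 0 for i > k, since then v_i <= v_1/2 <= v_j for all j <= k.
   An Abel-summation identity for the weights 1/((y+1)(y+2)) turns the
   double sum into sum_x M_x/((x+1)(x+2)) - (sum_x M_x)/(K+2), so
     sum_i B_i = (K+1)/(K+2) + sum_x M_x/((x+1)(x+2)) <= (K+1)/(K+2) <= 1.
   The file first collects facts on log2 and log2dag, then the summation
   identity, then the analysis of the B_i under the hypotheses of the
   theorem (a section), and finally assembles the theorem. *)

Lemma div_le_iff x y c : 0 < y -> (x / y <= c <-> x <= c * y).
Proof.
  intros Hy; split; intros H.
  - replace x with (x / y * y) by (field; lra); apply Rmult_le_compat_r; lra.
  - apply (Rmult_le_reg_r y); [exact Hy|]; replace (x / y * y) with x by (field; lra); lra.
Qed.

Lemma le_div_iff x y c : 0 < y -> (c <= x / y <-> c * y <= x).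
Proof.
  intros Hy; split; intros H.
  - replace x with (x / y * y) by (field; lra); apply Rmult_le_compat_r; lra.
  - apply (Rmult_le_reg_r y); [exact Hy|]; replace (x / y * y) with x by (field; lra); lra.
Qed.

Lemma ln2_pos : 0 < ln 2.
Proof. pose proof ln_lt_2; lra. Qed.

Lemma log2_le x y : 0 < x -> x <= y -> log2 x <= log2 y.
Proof.
  intros Hx Hxy; unfold log2, Rdiv.
  apply Rmult_le_compat_r; [left; apply Rinv_0_lt_compat, ln2_pos|].
  destruct (Req_dec x y) as [<-|Hne]; [lra|].
  left; apply ln_increasing; lra.
Qed.

Lemma log2_1 : log2 1 = 0.
Proof. unfold log2; rewrite ln_1; unfold Rdiv; ring. Qed.

Lemma log2_2 : log2 2 = 1.
Proof. unfold log2; field; pose proof ln2_pos; lra. Qed.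

Lemma log2_div x y : 0 < x -> 0 < y -> log2 (x / y) = log2 x - log2 y.
Proof.
  intros; unfold log2; rewrite (Rdiv_def x y).
  rewrite ln_mult, ln_Rinv by (try apply Rinv_0_lt_compat; lra).
  field; pose proof ln2_pos; lra.
Qed.

Lemma log2_2div x y : 0 < x -> 0 < y -> log2 (2 * x / y) = 1 + log2 x - log2 y.
Proof.
  intros; rewrite log2_div, <- log2_2 by lra.
  unfold log2; rewrite ln_mult by lra; field; pose proof ln2_pos; lra.
Qed.

Lemma log2dag_le_1 a : a <= 1 -> log2dag a = 0.
Proof.
  intros Ha; unfold log2dag; destruct (Rle_dec a 0) as [|Hpos]; [reflexivity|].
  assert (log2 a <= 0) by (rewrite <- log2_1; apply log2_le; lra).
  unfold Rmin, Rmax; destruct (Rle_dec 1 (log2 a)); destruct (Rle_dec 0 _); lra.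
Qed.

Lemma log2dag_1_2 a : 1 <= a <= 2 -> log2dag a = log2 a.
Proof.
  intros Ha; unfold log2dag; destruct (Rle_dec a 0); [lra|].
  assert (0 <= log2 a) by (rewrite <- log2_1; apply log2_le; lra).
  assert (log2 a <= 1) by (rewrite <- log2_2; apply log2_le; lra).
  unfold Rmin, Rmax; destruct (Rle_dec 1 (log2 a)); destruct (Rle_dec 0 _); lra.
Qed.

(* Abel summation for the weights w_y = 1/((y+1)(y+2)), whose partial sums
   telescope: sum_(x<y<=K) (L_x - L_y) w_y summed over x <= K equals
   sum_x L_x w_x - (sum_x L_x)/(K+2). *)
Lemma ordered_differences_sum (L : nat -> R) K :
  sum_f_R0 (fun x => sum_f_R0 (fun y =>
      if Nat.ltb x y then (L x - L y) / ((INR y + 1) * (INR y + 2)) else 0) K) K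
  = sum_f_R0 (fun x => L x / ((INR x + 1) * (INR x + 2))) K
    - sum_f_R0 L K / (INR K + 2).
Proof.
  induction K as [|K IH]; [simpl; field|].
  set (c := (INR (S K) + 1) * (INR (S K) + 2)).
  (* Peeling off the last row (empty) and the last column of the double sum. *)
  assert (Hsplit :
    sum_f_R0 (fun x => sum_f_R0 (fun y =>
        if Nat.ltb x y then (L x - L y) / ((INR y + 1) * (INR y + 2)) else 0) (S K)) (S K)
    = sum_f_R0 (fun x => sum_f_R0 (fun y =>
        if Nat.ltb x y then (L x - L y) / ((INR y + 1) * (INR y + 2)) else 0) K) K
      + sum_f_R0 (fun x => (L x - L (S K)) / c) K).
  { rewrite tech5.
    rewrite (sum_eq_R0 (fun y => if Nat.ltb (S K) y then _ else 0)).
    2:{ intros y Hy; destruct (Nat.ltb_spec (S K) y); [lia|reflexivity]. }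
    rewrite Rplus_0_r, <- sum_plus; apply sum_eq; intros x Hx; rewrite tech5.
    destruct (Nat.ltb_spec x (S K)); [reflexivity|lia]. }
  rewrite Hsplit, IH.
  rewrite (sum_eq (fun x => (L x - L (S K)) / c)
                  (fun x => L x * / c + (- L (S K)) * / c)) by (intros; unfold Rdiv; ring).
  rewrite sum_plus, sum_cte, <- scal_sum, !tech5.
  unfold c; rewrite !S_INR; field.
  pose proof (pos_INR K); lra.
Qed.

(* The analysis of the B_i.  Here k = K + 1 and the top block is indexed by
   x = 0..K, corresponding to v_(x+1). *)
Section BValues.

Variables (n K : nat) (v : nat -> R).
Hypothesis Hmono : forall i, (1 <= i < n)%nat -> v (S i) <= v i.
Hypothesis Hnonneg : forall i, (1 <= i <= n)%nat -> 0 <= v i.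
Hypothesis Hv1 : 0 < v 1%nat.
Hypothesis HKn : (S K <= n)%nat.
Hypothesis Hvk : v (S K) > v 1%nat / 2.
Hypothesis Hkmax : forall i, (S K < i <= n)%nat -> ~ (v i > v 1%nat / 2).

Definition M (x : nat) : R := log2 (v (x + 1)) - log2 (v 1%nat).

Lemma v_antitone i j : (1 <= i <= j)%nat -> (j <= n)%nat -> v j <= v i.
Proof.
  intros Hij Hjn; induction j as [|j IH]; [lia|].
  destruct (Nat.eq_dec i (S j)) as [->|Hne]; [lra|].
  pose proof (Hmono j ltac:(lia)); pose proof (IH ltac:(lia) ltac:(lia)); lra.
Qed.

Lemma top_block_bounds x : (x <= K)%nat -> v 1%nat / 2 < v (x + 1) <= v 1%nat.
Proof.
  intros Hx; split.
  - pose proof (v_antitone (x + 1) (S K) ltac:(lia) HKn); lra.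
  - apply v_antitone; lia.
Qed.

Lemma M_nonpos x : (x <= K)%nat -> M x <= 0.
Proof.
  intros Hx; pose proof (top_block_bounds x Hx); unfold M.
  pose proof (log2_le (v (x + 1)) (v 1%nat) ltac:(lra) ltac:(lra)); lra.
Qed.

Lemma top_pair_term x y : (x <= K)%nat -> (y <= K)%nat ->
  log2dag (v (x + 1) / v (y + 1)) = if Nat.ltb x y then M x - M y else 0.
Proof.
  intros Hx Hy; pose proof (top_block_bounds x Hx); pose proof (top_block_bounds y Hy).
  destruct (Nat.ltb_spec x y).
  - pose proof (v_antitone (x + 1) (y + 1) ltac:(lia) ltac:(lia)).
    rewrite log2dag_1_2 by (split; [apply le_div_iff|apply div_le_iff]; lra).
    rewrite log2_div by lra.
    unfold M; ring.
  - pose proof (v_antitone (y + 1) (x + 1) ltac:(lia) ltac:(lia)).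
    apply log2dag_le_1, div_le_iff; lra.
Qed.

Lemma sum_f_from_1 (f : nat -> R) :
  sum_f 1 (S K) f = sum_f_R0 (fun y => f (y + 1)%nat) K.
Proof. unfold sum_f; now replace (S K - 1)%nat with K by lia. Qed.

Lemma B_top_block x : (x <= K)%nat ->
  Bval v (S K) (x + 1) = (1 + M x) / (INR K + 2)
    + sum_f_R0 (fun y => if Nat.ltb x y
                         then (M x - M y) / ((INR y + 1) * (INR y + 2)) else 0) K.
Proof.
  intros Hx; unfold Bval; rewrite sum_f_from_1.
  pose proof (top_block_bounds x Hx).
  rewrite log2dag_1_2 by (split; [apply le_div_iff|apply div_le_iff]; lra).
  rewrite log2_2div by lra.
  replace (INR (S K + 1)) with (INR K + 2) by (rewrite plus_INR, S_INR; simpl; ring).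
  f_equal; [unfold M; f_equal; ring|].
  apply sum_eq; intros y Hy; rewrite top_pair_term by lia.
  rewrite plus_INR; simpl INR.
  destruct (Nat.ltb x y); [f_equal; ring|unfold Rdiv; ring].
Qed.

Lemma B_tail x : (K < x <= n - 1)%nat -> Bval v (S K) (x + 1) = 0.
Proof.
  intros Hx; unfold Bval; rewrite sum_f_from_1.
  assert (Hsmall : v (x + 1) <= v 1%nat / 2)
    by (pose proof (Hkmax (x + 1) ltac:(lia)); lra).
  pose proof (Hnonneg (x + 1) ltac:(lia)).
  rewrite log2dag_le_1 by (apply div_le_iff; lra).
  rewrite sum_eq_R0; [unfold Rdiv; ring|].
  intros y Hy; pose proof (top_block_bounds y Hy).
  rewrite log2dag_le_1 by (apply div_le_iff; lra); unfold Rdiv; ring.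
Qed.

Lemma top_block_sum_le : sum_f_R0 (fun x => Bval v (S K) (x + 1)) K <= 1.
Proof.
  rewrite (sum_eq _ _ K B_top_block), sum_plus, ordered_differences_sum.
  rewrite (sum_eq _ (fun x => / (INR K + 2) + M x * / (INR K + 2)))
    by (intros; unfold Rdiv; ring).
  rewrite sum_plus, sum_cte, <- scal_sum, S_INR.
  assert (Hweighted : sum_f_R0 (fun x => M x / ((INR x + 1) * (INR x + 2))) K <= 0).
  { rewrite <- (Rmult_0_l (INR (S K))), <- sum_cte.
    apply sum_Rle; intros x Hx; pose proof (M_nonpos x Hx); pose proof (pos_INR x).
    apply div_le_iff; nra. }
  pose proof (pos_INR K).
  assert (/ (INR K + 2) * (INR K + 1) <= 1)
    by (rewrite Rmult_comm; apply div_le_iff; lra).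
  lra.
Qed.

End BValues.

Theorem mainTheorem12 (n : nat) (v : nat -> R) (k : nat)
  (Hn : (1 <= n)%nat)
  (Hmono : forall i, (1 <= i < n)%nat -> v (S i) <= v i)
  (Hnonneg : forall i, (1 <= i <= n)%nat -> 0 <= v i)
  (Hv1 : 0 < v 1%nat)
  (Hk : (1 <= k <= n)%nat)
  (Hvk : v k > v 1%nat / 2)
  (Hkmax : forall i, (k < i <= n)%nat -> ~ (v i > v 1%nat / 2)) :
  sum_f 1 n (fun i => Bval v k i) <= 1.
Proof.
  destruct k as [|K]; [lia|].
  pose proof (top_block_sum_le n K v Hmono Hv1 ltac:(lia) Hvk) as Htop.
  unfold sum_f; cbv beta.
  destruct (Nat.eq_dec (S K) n) as [<-|Hlt].
  - now replace (S K - 1)%nat with K by lia.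
  -
    rewrite (tech2 _ K (n - 1)) by lia.
    rewrite (sum_eq_R0 (fun i => Bval v (S K) (S K + i + 1))); [lra|].
    intros i Hi; apply (B_tail n K v Hmono Hnonneg Hv1 ltac:(lia) Hvk Hkmax); lia.
Qed.
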